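(* Let $\mathcal{L}$ be a square lattice and $\alpha \in \mathcal{L}$. Then $|E_\alpha| \geq |\mathcal{L}| - |J(\mathcal{L})|$.
   Context: All lattices are finite distributive lattices. An element $x$ of $\mathcal{L}$ is join-irreducible if $x = y \vee z$ implies $x = y$ or $x = z$ (so the minimum of $\mathcal{L}$ is join-irreducible); $J(\mathcal{L})$ denotes the poset of join-irreducibles. $\mathcal{L}$ is a tree lattice if the Hasse diagram of $J(\mathcal{L})$ is a tree; its root is the minimum element. A square lattice is a tree lattice such that in the Hasse diagram of $J(\mathcal{L})$ every vertex other than the root has degree at most two. A diamond in $\mathcal{L}$ is a set $D = \{x, y, x \vee y, x \wedge y\}$ with $x, y \in \mathcal{L}$ non-comparable. For $\alpha \in \mathcal{L}$, $E_\alpha = \{(\alpha, \gamma) : \text{there is a diamond } D \text{ of } \mathcal{L} \text{ with } \alpha, \gamma \in D\}$. *)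

From mathcomp Require Import all_boot all_order.
Set Implicit Arguments. Unset Strict Implicit. Unset Printing Implicit Defensive.
Import Order.Theory.
Local Open Scope order_scope.

Section LatticeDefs.
Context {d : Order.disp_t} {L : finTBDistrLatticeType d}.

(* join-irreducible, as in the paper: x = y \/ z implies x = y or x = z
   (so the minimum is join-irreducible) *)
Definition join_irr (x : L) : bool :=
  [forall y : L, forall z : L, (x == y `|` z) ==> (x == y) || (x == z)].

Definition Jset : {set L} := [set x | join_irr x].

Definition Jcover (x y : L) : bool :=
  [&& x \in Jset, y \in Jset, x < y &
      ~~ [exists z : L, [&& z \in Jset, x < z & z < y]]].

Definition hasse_adj (x y : L) : bool := Jcover x y || Jcover y x.

Definition hasse_connected : Prop :=
  forall x y, x \in Jset -> y \in Jset -> connect hasse_adj x y.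

Definition hasse_acyclic : Prop :=
  forall s : seq L, uniq s -> 3 <= size s -> ~~ cycle hasse_adj s.

Definition tree_lattice : Prop := hasse_connected /\ hasse_acyclic.

(* root = minimum element (\bot) *)
Definition hasse_degree (x : L) : nat := #|[set y | hasse_adj x y]|.

Definition square_lattice : Prop :=
  tree_lattice /\ forall x, x \in Jset -> x != \bot -> hasse_degree x <= 2.

Definition in_diamond (x y z : L) : bool :=
  ~~ (x >=< y) && (z \in [:: x; y; x `|` y; x `&` y]).

Definition Eset (alpha : L) : {set L * L} :=
  [set p : L * L | (p.1 == alpha) &&
     [exists x : L, exists y : L, in_diamond x y p.1 && in_diamond x y p.2]].

End LatticeDefs.

From mathcomp Require Import all_boot all_order.
Set Implicit Arguments. Unset Strict Implicit. Unset Printing Implicit Defensive.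
Import Order.Theory.
Local Open Scope order_scope.

(* In a square lattice every non-root vertex of the Hasse tree of J(L) has a
   unique lower cover (acyclicity) and, having degree at most two, a unique
   upper cover; hence J(L) is a family of chains glued at the root, and for a
   join-irreducible j <> \bot comparability with j is transitive on J(L).
   Splitting the join-irreducibles below x into those comparable with j and
   the others writes x as the join of two disjoint parts, monotonically in x.
   If gamma is not join-irreducible, choosing j <> \bot below gamma makes both
   parts of gamma nonzero, and comparing the splittings of alpha and gamma
   produces a diamond containing both.  Thus E_alpha contains (alpha, gamma)
   for every gamma outside J(L). *)

Lemma measure_ind (T : Type) (f : T -> nat) (P : T -> Prop) :
  (forall x, (forall y, (f y < f x)%N -> P y) -> P x) -> forall x, P x.
Proof.
move=> IH x; have [n] := ubnP (f x); elim: n x => // n IHn x fx.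
by apply: IH => y fy; apply: IHn; apply: leq_trans fy _.
Qed.

Lemma cycle_of_meeting_paths (T : eqType) (e : rel T) (x : T) (S U : seq T) :
  symmetric e -> path e x S -> path e x U -> uniq (x :: S) -> uniq (x :: U) ->
  has (mem U) S -> head x S != head x U ->
  exists c : seq T, [/\ uniq c, 2 < size c & cycle e c].
Proof.
move=> e_sym pS pU uS uU hasSU.
(* w is the first vertex of S on U; go out along S up to w, come back along U. *)
case/split_find: hasSU pS uS => w s1 s2 wU s1U pS uS.
case/splitPr: wU pU uU s1U => t1 t2 pU uU s1U heads.
exists (x :: rcons s1 w ++ rev t1); split.
- move: uS uU; rewrite -!cat_cons !cat_uniq rev_uniq has_rev -!rcons_cons !rcons_uniq.
  rewrite /= => /andP[-> _] /and4P[/andP[xt1 ->] /norP[wxt1 _] _ _].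
  rewrite andbT; apply/hasPn => y yt1; rewrite in_cons mem_rcons in_cons.
  apply/negP => /or3P[/eqP yx|/eqP yw|ys1].
  + by rewrite -yx yt1 in xt1.
  + by rewrite -yw in_cons yt1 orbT in wxt1.
  + by move/hasPn: s1U => /(_ y ys1); rewrite /= mem_cat yt1.
- rewrite /= size_cat size_rcons size_rev.
  case: s1 t1 heads {pS uS pU uU s1U} => [|? ?] [|? ?] //=.
  by rewrite eqxx.
- rewrite /= rcons_cat cat_path last_rcons -rev_cons.
  have -> : path e w (rev (x :: t1)) = path (fun z => e^~ z) x (rcons t1 w).
    by rewrite -[RHS]rev_path last_rcons belast_rcons.
  move: pS pU; rewrite -cat_rcons !cat_path => /andP[-> _] /andP[pU _].
  by apply: sub_path pU => u v; rewrite e_sym.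
Qed.

Section JoinIrreducibles.
Context {d : Order.disp_t} {L : finTBDistrLatticeType d}.
Implicit Types a b c j k l x y : L.

Definition nbelow x := #|[set z : L | z < x]|.
Definition nabove x := #|[set z : L | x < z]|.

Lemma nbelow_lt x y : x < y -> (nbelow x < nbelow y)%N.
Proof.
move=> xy; apply/proper_card/properP; split; last by exists x; rewrite !inE ?ltxx.
by apply/subsetP => z; rewrite !inE => /lt_trans; apply.
Qed.

Lemma nabove_lt x y : x < y -> (nabove y < nabove x)%N.
Proof.
move=> xy; apply/proper_card/properP; split; last by exists y; rewrite !inE ?ltxx.
by apply/subsetP => z; rewrite !inE; apply: lt_trans.
Qed.

Lemma bot_in_Jset : (\bot : L) \in Jset.
Proof.
rewrite inE; apply/forallP => y; apply/forallP => z; apply/implyP => /eqP yz.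
by rewrite eq_sym -lex0 yz leUl.
Qed.

Lemma notin_Jset_join x : x \notin Jset -> exists y z, [/\ x = y `|` z, y < x & z < x].
Proof.
rewrite inE => /forallPn[y /forallPn[z]]; rewrite negb_imply negb_or.
case/and3P=> /eqP xyz xy xz; exists y, z.
by rewrite !lt_def xy xz xyz leUl leUr.
Qed.

Lemma Jcover_lt a b : Jcover a b -> a < b.
Proof. by case/and4P. Qed.

Lemma JcoverJl a b : Jcover a b -> a \in Jset.
Proof. by case/and4P. Qed.

Lemma JcoverJr a b : Jcover a b -> b \in Jset.
Proof. by case/and4P. Qed.

Lemma exists_lower_Jcover k j : k \in Jset -> j \in Jset -> k < j ->
  exists2 c, Jcover c j & k <= c.
Proof.
move=> kJ jJ kj; pose P c := [&& c \in Jset, k <= c & c < j].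
have Pk : P k by rewrite /P kJ lexx kj.
case: (arg_maxnP nbelow Pk) => c /and3P[cJ kc cj] c_max.
exists c => //; rewrite /Jcover cJ jJ cj /=; apply/existsPn => z.
apply/negP => /and3P[zJ cz zj]; have /= := c_max z.
by rewrite /P zJ (le_trans kc (ltW cz)) zj leqNgt (nbelow_lt cz) => /(_ isT).
Qed.

Lemma exists_upper_Jcover k j : k \in Jset -> j \in Jset -> k < j ->
  exists2 c, Jcover k c & c <= j.
Proof.
move=> kJ jJ kj; pose P c := [&& c \in Jset, k < c & c <= j].
have Pj : P j by rewrite /P jJ kj lexx.
case: (arg_minnP nbelow Pj) => c /and3P[cJ kc cj] c_min.
exists c => //; rewrite /Jcover kJ cJ kc /=; apply/existsPn => z.
apply/negP => /and3P[zJ kz zc]; have /= := c_min z.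
by rewrite /P zJ kz (le_trans (ltW zc) cj) leqNgt (nbelow_lt zc) => /(_ isT).
Qed.

Lemma descending_Jcover_path x : x \in Jset ->
  exists s, [/\ path hasse_adj x s, path >%O x s & last x s = \bot].
Proof.
elim/(@measure_ind _ nbelow): x => x IH xJ.
have [->|xb] := eqVneq x \bot; first by exists [::].
have bx : \bot < x by rewrite lt0x.
have [c cx _] := exists_lower_Jcover bot_in_Jset xJ bx.
have [s [ps ds ls]] := IH c (nbelow_lt (Jcover_lt cx)) (JcoverJl cx).
by exists (c :: s); rewrite /= /hasse_adj cx orbT ps (Jcover_lt cx) ds.
Qed.

Lemma join_Jset_le x : \join_(k | (k \in Jset) && (k <= x)) k = x.
Proof.
elim/(@measure_ind _ nbelow): x => x IH.
apply/le_anti/andP; split; first by apply/joinsP => k /andP[].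
have [xJ|/notin_Jset_join[y [z [xyz yx zx]]]] := boolP (x \in Jset).
  by apply: joins_sup; rewrite xJ lexx.
have le_part w : w < x -> w <= \join_(k | (k \in Jset) && (k <= x)) k.
  move=> wx; rewrite -{1}(IH w (nbelow_lt wx)); apply/joinsP => k /andP[kJ kw].
  by apply: joins_sup; rewrite kJ (le_trans kw (ltW wx)).
by rewrite {1}xyz leUx !le_part.
Qed.

Lemma exists_Jset_le x : x != \bot -> exists2 j, j \in Jset & (\bot < j) && (j <= x).
Proof.
move=> xb; apply/exists_inP; apply: contraNT xb => /exists_inPn none.
rewrite -(join_Jset_le x) big1 // => k /andP[kJ kx].
by apply/eqP; move: (none k kJ); rewrite kx andbT lt0x negbK.
Qed.

Lemma joins_chain_mem (P : pred L) : P \bot -> {in P &, forall a b, a >=< b} ->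
  P (\join_(k | P k) k).
Proof.
move=> P0 chain; apply: (big_ind (fun x => P x)) => // a b Pa Pb.
by case/orP: (chain a b Pa Pb) => [/join_r|/join_l] ->.
Qed.

Definition comp_part j x := \join_(k | (k \in Jset) && (k <= x) && (k >=< j)) k.
Definition incomp_part j x := \join_(k | (k \in Jset) && (k <= x) && ~~ (k >=< j)) k.

Lemma comp_incomp_join j x : comp_part j x `|` incomp_part j x = x.
Proof. by rewrite -bigID join_Jset_le. Qed.

Lemma joins_Jset_mono (Q : pred L) x y : x <= y ->
  \join_(k | (k \in Jset) && (k <= x) && Q k) k <=
  \join_(k | (k \in Jset) && (k <= y) && Q k) k.
Proof.
move=> xy; apply/joinsP => k /andP[/andP[kJ kx] Qk].
by apply: joins_sup; rewrite kJ (le_trans kx xy).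
Qed.

Lemma comp_part_mono j : {homo comp_part j : x y / x <= y}.
Proof. by move=> x y; apply: joins_Jset_mono. Qed.

Lemma incomp_part_mono j : {homo incomp_part j : x y / x <= y}.
Proof. by move=> x y; apply: joins_Jset_mono. Qed.

Lemma le_comp_part j x : j \in Jset -> j <= x -> j <= comp_part j x.
Proof. by move=> jJ jx; apply: joins_sup; rewrite jJ jx comparablexx. Qed.

Definition share_diamond a b : bool :=
  [exists x, exists y, in_diamond x y a && in_diamond x y b].

Lemma share_diamondC a b : share_diamond a b = share_diamond b a.
Proof.
by apply/existsP/existsP => -[x /existsP[y xy]];
  exists x; apply/existsP; exists y; rewrite andbC.
Qed.

Lemma share_diamond_in x y a b : ~~ (x >=< y) ->
  a \in [:: x; y; x `|` y; x `&` y] -> b \in [:: x; y; x `|` y; x `&` y] ->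
  share_diamond a b.
Proof.
move=> xy ax bx; apply/existsP; exists x.
by apply/existsP; exists y; rewrite /in_diamond xy ax bx.
Qed.

Lemma disjoint_incomparable x y : \bot < x -> \bot < y -> x `&` y = \bot -> ~~ (x >=< y).
Proof.
move=> xb yb xy; apply/negP => /orP[/meet_l|/meet_r]; rewrite xy.
- by move=> x0; rewrite -x0 ltxx in xb.
- by move=> y0; rewrite -y0 ltxx in yb.
Qed.

Lemma share_diamond_lt_degenerate p1 p2 q1 q2 : p1 `|` p2 < q1 `|` q2 ->
  p1 <= q1 -> p2 <= q2 -> q1 `&` q2 = \bot -> \bot < q2 -> q2 <= q1 `|` p2 ->
  share_diamond (p1 `|` p2) (q1 `|` q2).
Proof.
move=> pq le1 le2 q12 q2b q2w.
have e2 : p2 = q2.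
  by apply/le_anti; rewrite le2 -(@disjoint_lexUr _ _ q1) // meetC.
subst p2.
have epq : (p1 `|` q2) `|` q1 = q1 `|` q2 by rewrite joinAC (join_r le1).
rewrite -epq in pq *.
apply: (@share_diamond_in (p1 `|` q2) q1); rewrite ?inE ?eqxx ?orbT //.
apply/negP => /orP[pq1|q1p]; last by rewrite (join_l q1p) ltxx in pq.
have : q2 <= q1 `&` q2 by rewrite lexI lexx (le_trans (leUr _ _) pq1).
by rewrite q12 lex0 => /eqP q20; rewrite q20 ltxx in q2b.
Qed.

(* [p1 `|` q2] and [q1 `|` p2] have join [q1 `|` q2] and meet [p1 `|` p2]; when
   they are comparable, one half of the splitting does not move. *)
Lemma share_diamond_lt p1 p2 q1 q2 : p1 `|` p2 < q1 `|` q2 ->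
  p1 <= q1 -> p2 <= q2 -> q1 `&` q2 = \bot -> \bot < q1 -> \bot < q2 ->
  share_diamond (p1 `|` p2) (q1 `|` q2).
Proof.
move=> pq le1 le2 q12 q1b q2b.
have [/orP[vw|wv]|nvw] := boolP ((p1 `|` q2) >=< (q1 `|` p2)).
- exact: share_diamond_lt_degenerate (le_trans (leUr _ _) vw).
- rewrite [p1 `|` p2]joinC [q1 `|` q2]joinC in pq *.
  apply: share_diamond_lt_degenerate pq le2 le1 _ q1b _; first by rewrite meetC.
  by rewrite joinC (le_trans (leUl _ _) wv).
have vw_join : (p1 `|` q2) `|` (q1 `|` p2) = q1 `|` q2.
  by rewrite joinACA (join_r le1) (join_l le2).
have vw_meet : (p1 `|` q2) `&` (q1 `|` p2) = p1 `|` p2.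
  rewrite meetUl (meet_l (le_trans le1 (leUl _ _))) meetUr [q2 `&` q1]meetC q12.
  by rewrite join0x (meet_r le2).
by rewrite -vw_join -vw_meet; apply: share_diamond_in nvw _ _; rewrite !inE eqxx ?orbT.
Qed.

Lemma share_diamond_split (f1 f2 : L -> L) alpha gamma :
  {homo f1 : x y / x <= y} -> {homo f2 : x y / x <= y} ->
  (forall x, f1 x `|` f2 x = x) -> (forall x, f1 x `&` f2 x = \bot) ->
  \bot < f1 gamma -> \bot < f2 gamma -> share_diamond alpha gamma.
Proof.
move=> f1_mono f2_mono f_join f_meet g1b g2b.
have [/comparable_ltgtP[ag|ga|->]|nag] := boolP (alpha >=< gamma).
- have le_ag := ltW ag; rewrite -(f_join alpha) -(f_join gamma) in ag *.
  exact: share_diamond_lt ag (f1_mono _ _ le_ag) (f2_mono _ _ le_ag) (f_meet _) g1b g2b.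
- have le_ga := ltW ga; rewrite share_diamondC -(f_join alpha) -(f_join gamma) in ga *.
  apply: share_diamond_lt ga (f1_mono _ _ le_ga) (f2_mono _ _ le_ga) (f_meet _) _ _.
  + exact: lt_le_trans g1b (f1_mono _ _ le_ga).
  + exact: lt_le_trans g2b (f2_mono _ _ le_ga).
- have g12 := disjoint_incomparable g1b g2b (f_meet gamma).
  by rewrite -(f_join gamma); apply: share_diamond_in g12 _ _; rewrite !inE eqxx ?orbT.
- by apply: share_diamond_in nag _ _; rewrite !inE eqxx ?orbT.
Qed.

Section Acyclic.
Hypothesis acyclic : @hasse_acyclic d L.

Lemma Jcover_lower_unique a b j : Jcover a j -> Jcover b j -> a = b.
Proof.
move=> aj bj; apply/eqP/negP => /negP nab.
have [sa [pa da la]] := descending_Jcover_path (JcoverJl aj).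
have [sb [pb db lb]] := descending_Jcover_path (JcoverJl bj).
have gt_uniq := sorted_uniq (rev_trans lt_trans) (@ltxx _ L).
have [c [uc sc cc]] : exists c : seq L, [/\ uniq c, 2 < size c & cycle hasse_adj c].
  apply: (@cycle_of_meeting_paths _ _ j (a :: sa) (b :: sb)) => //.
  - by rewrite /symmetric /hasse_adj => ? ?; rewrite orbC.
  - by rewrite /= pa /hasse_adj aj orbT.
  - by rewrite /= pb /hasse_adj bj orbT.
  - by apply: gt_uniq; rewrite /= (Jcover_lt aj).
  - by apply: gt_uniq; rewrite /= (Jcover_lt bj).
  - by apply/hasP; exists \bot; [rewrite -la | rewrite -lb]; apply: mem_last.
by have := acyclic uc sc; rewrite cc.
Qed.

Lemma comparable_below j k l : j \in Jset -> k \in Jset -> l \in Jset ->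
  k <= j -> l <= j -> k >=< l.
Proof.
elim/(@measure_ind _ nbelow): j k l => j IH k l jJ kJ lJ kj lj.
have [->|nkj] := eqVneq k j; first by rewrite comparable_sym le_comparable.
have [->|nlj] := eqVneq l j; first exact: le_comparable.
have kj' : k < j by rewrite lt_neqAle nkj.
have lj' : l < j by rewrite lt_neqAle nlj.
have [c cj kc] := exists_lower_Jcover kJ jJ kj'.
have [c' c'j lc'] := exists_lower_Jcover lJ jJ lj'.
rewrite -(Jcover_lower_unique cj c'j) in lc'.
exact: IH (nbelow_lt (Jcover_lt cj)) _ _ (JcoverJl cj) kJ lJ kc lc'.
Qed.

End Acyclic.

Section Square.
Hypothesis square : @square_lattice d L.

Let acyclic : @hasse_acyclic d L := proj2 (proj1 square).

Lemma Jcover_upper_unique j a b : j \in Jset -> \bot < j ->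
  Jcover j a -> Jcover j b -> a = b.
Proof.
move=> jJ jb ja jb'; apply/eqP/negP => /negP nab.
have [c cj _] := exists_lower_Jcover bot_in_Jset jJ jb.
have ca : c < a := lt_trans (Jcover_lt cj) (Jcover_lt ja).
have cb : c < b := lt_trans (Jcover_lt cj) (Jcover_lt jb').
have : (#|c |: [set a; b]| <= hasse_degree j)%N.
  apply/subset_leq_card/subsetP => y; rewrite !inE /hasse_adj.
  by case/or3P => /eqP->; rewrite ?cj ?ja ?jb' ?orbT.
rewrite cardsU1 cards2 !inE nab (lt_eqF ca) (lt_eqF cb) /=.
have jb0 : j != \bot by rewrite -lt0x.
by move/leq_trans/(_ (proj2 square j jJ jb0)).
Qed.

Lemma comparable_above j k l : j \in Jset -> \bot < j -> k \in Jset -> l \in Jset ->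
  j <= k -> j <= l -> k >=< l.
Proof.
move=> + + kJ lJ; elim/(@measure_ind _ nabove): j => j IH jJ jb jk jl.
have [<-|njk] := eqVneq j k; first exact: le_comparable.
have [<-|njl] := eqVneq j l; first by rewrite comparable_sym le_comparable.
have jk' : j < k by rewrite lt_neqAle njk.
have jl' : j < l by rewrite lt_neqAle njl.
have [u ju uk] := exists_upper_Jcover jJ kJ jk'.
have [u' ju' ul] := exists_upper_Jcover jJ lJ jl'.
rewrite -(Jcover_upper_unique jJ jb ju ju') in ul.
have ju_lt := Jcover_lt ju.
exact: IH (nabove_lt ju_lt) (JcoverJr ju) (lt_trans jb ju_lt) uk ul.
Qed.

Lemma comparable_trans_Jset a b c : a \in Jset -> b \in Jset -> c \in Jset ->
  \bot < b -> a >=< b -> b >=< c -> a >=< c.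
Proof.
move=> aJ bJ cJ bb /orP[ab|ba] /orP[bc|cb].
- exact/le_comparable/(le_trans ab bc).
- exact: (comparable_below acyclic bJ aJ cJ ab cb).
- exact: comparable_above bJ bb aJ cJ ba bc.
- by rewrite comparable_sym; apply/le_comparable/(le_trans cb ba).
Qed.

Lemma comp_incomp_meet j x : j \in Jset -> \bot < j ->
  comp_part j x `&` incomp_part j x = \bot.
Proof.
move=> jJ jb; rewrite meetC; apply: joins_disjoint => k1 /andP[/andP[k1J _] k1j].
rewrite meetC; apply: joins_disjoint => k2 /andP[/andP[k2J _] k2j].
rewrite -[LHS](join_Jset_le (k1 `&` k2)) big1 // => l /andP[lJ].
rewrite lexI => /andP[lk1 lk2]; apply: contraNeq k2j; rewrite -lt0x => lb.
have lj : l >=< j.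
  by apply: (comparable_trans_Jset lJ _ jJ (lt_le_trans lb lk1) (le_comparable lk1)).
by apply: (comparable_trans_Jset k2J lJ jJ lb _ lj); rewrite comparable_sym le_comparable.
Qed.

Lemma comp_part_in_Jset j x : j \in Jset -> \bot < j -> comp_part j x \in Jset.
Proof.
move=> jJ jb; pose P k := (k \in Jset) && (k <= x) && (k >=< j).
suff /andP[/andP[]] : P (comp_part j x) by [].
apply: joins_chain_mem; first by rewrite /P bot_in_Jset le0x /=; apply/le_comparable/le0x.
move=> k1 k2 /andP[/andP[k1J _] k1j] /andP[/andP[k2J _] k2j].
by apply: (comparable_trans_Jset k1J jJ k2J jb k1j); rewrite comparable_sym.
Qed.

Lemma share_diamond_notin_Jset alpha gamma : gamma \notin Jset -> share_diamond alpha gamma.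
Proof.
move=> gJ; have gb : gamma != \bot by apply: contraNneq gJ => ->; exact: bot_in_Jset.
have [j jJ /andP[jb jg]] := exists_Jset_le gb.
apply: (@share_diamond_split (comp_part j) (incomp_part j)).
- exact: comp_part_mono.
- exact: incomp_part_mono.
- exact: comp_incomp_join.
- by move=> x; apply: comp_incomp_meet.
- exact: lt_le_trans jb (le_comp_part jJ jg).
- rewrite lt0x; apply: contraNneq gJ => g20.
  by rewrite -(comp_incomp_join j gamma) g20 joinx0 comp_part_in_Jset.
Qed.

End Square.
End JoinIrreducibles.

Local Close Scope order_scope.

Theorem theorem2 (d : Order.disp_t) (L : finTBDistrLatticeType d) (alpha : L) :
  @square_lattice d L ->
  #|{: L}| - #|@Jset d L| <= #|Eset alpha|.
Proof.
move=> square.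
have -> : #|{: L}| - #|@Jset d L| = #|~: @Jset d L| by rewrite [#|~: _|]cardsCs setCK.
rewrite -(@card_imset _ _ (pair alpha)); last by move=> ? ? [].
apply/subset_leq_card/subsetP => _ /imsetP[gamma gJ ->].
by rewrite inE /= eqxx; apply: share_diamond_notin_Jset; rewrite in_setC in gJ.
Qed.
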